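(* Let $R$ be a commutative ring with identity, let $\boldsymbol{u}=(u_0,u_1,\dots)\in H_R$, and let $q(x)=\tau(x\boldsymbol{u})=(q_n(x))_{n\ge0}$, with $q_0(x)=1$ and $q_n(x)=\sum_{i=1}^nc_{i,n}x^i$ for $n\ge1$. Then $u_0=c_{1,1}$ and for every $m\ge2$, $$u_{m-1}=c_{1,m}+\sum_{\substack{k\mid m\\ k\neq1,m}}\frac{(-1)^{m/k}\,m!}{\frac{m}{k}\,(k!)^{m/k}}\,u_{k-1}.$$ In particular $u_{p-1}=c_{1,p}$ for every prime $p$.
   Context: $H_S$: sequences in a commutative ring $S$; $U_S$: those with first term $1$, a group under the Hurwitz product $(\boldsymbol{a}\star\boldsymbol{b})_n=\sum_{h=0}^n\binom{n}{h}a_hb_{n-h}$. Powers: for $\boldsymbol a=(1,a_1,\dots)\in U_S$ and $z\in S$, $\boldsymbol a^z[n]=\sum_{k=0}^nY_{n,k}(a_1,\dots,a_{n-k+1})\,z(z-1)\cdots(z-k+1)$ with $Y_{n,k}(y_1,y_2,\dots)=\sum\frac{n!}{\prod_l j_l!(l!)^{j_l}}\prod_ly_l^{j_l}$ over nonnegative $(j_l)$, $\sum j_l=k$, $\sum lj_l=n$ ($Y_{0,0}=1$, $Y_{n,0}=0$ for $n\ge1$); over $\mathbb Q$-algebras this is the sequence with e.g.f. $A(t)^z$. $\boldsymbol{b}^{(1)}=(1,1,1,\dots)$; for $i\ge2$, $\boldsymbol{b}^{(i)}$ has entries $1$ at positions $0$ and $i$, $0$ elsewhere. For $\boldsymbol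 z\in H_S$, $\tau(\boldsymbol z)\in U_S$ is the sequence whose first $n$ terms, for each $n\ge2$, are those of $(\boldsymbol{b}^{(1)})^{z_0}\star\cdots\star(\boldsymbol{b}^{(n-1)})^{z_{n-2}}$. Here $S=R[x]$ and $x\boldsymbol u=(xu_0,xu_1,\dots)$. *)

From HB Require Import structures.
From mathcomp Require Import all_boot all_order all_algebra.
Set Implicit Arguments. Unset Strict Implicit. Unset Printing Implicit Defensive.
Import Order.TTheory GRing.Theory Num.Theory.
Local Open Scope ring_scope.

Definition hprod (S : comPzRingType) (a b : nat -> S) : nat -> S :=
  fun n => \sum_(h < n.+1) ('C(n, h))%:R * a h * b (n - h)%N.

Definition hunit (S : comPzRingType) : nat -> S := fun n => if n == 0%N then 1 else 0.

Fixpoint hprods (S : comPzRingType) (f : nat -> nat -> S) (n : nat) : nat -> S :=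
  match n with
  | O => hunit S
  | n'.+1 => hprod (hprods f n') (f n)
  end.

(* Partial Bell polynomial Y_{n,k}(y_1, y_2, ...):
   sum over (j_1,...,j_n) with sum j_l = k, sum l j_l = n of
   n! / (prod_l j_l! (l!)^{j_l}) * prod_l y_l^{j_l}.
   The index l : 'I_n represents l+1 in {1..n}; j_l <= n necessarily.
   The coefficient is an integer, computed by exact nat division. *)
Definition bellY (S : comPzRingType) (n k : nat) (y : nat -> S) : S :=
  \sum_(j : {ffun 'I_n -> 'I_n.+1} |
          ((\sum_(l < n) (j l : nat))%N == k) &&
          ((\sum_(l < n) (l.+1 * j l))%N == n))
    ((n`! %/ (\prod_(l < n) ((j l)`! * (l.+1)`! ^ (j l))))%N)%:R
      * \prod_(l < n) y l.+1 ^+ (j l).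

Definition hpow (S : comPzRingType) (a : nat -> S) (z : S) : nat -> S :=
  fun n => \sum_(k < n.+1) bellY n k a * \prod_(i < k) (z - i%:R).

Definition bseq (S : comPzRingType) (i : nat) : nat -> S :=
  if i == 1%N then fun _ => 1
  else fun n => if (n == 0%N) || (n == i) then 1 else 0.

(* tau(z): its n-th entry (index m) is the index-m entry of
   (b^(1))^{z_0} * ... * (b^(N-1))^{z_{N-2}} with N = max(m+1, 2),
   the smallest N >= 2 whose "first N terms" include index m. *)
Definition tau (S : comPzRingType) (z : nat -> S) : nat -> S :=
  fun m => hprods (fun i => hpow (bseq S i) (z i.-1)) (maxn m.+1 2).-1 m.

Definition xseq (R : comNzRingType) (u : nat -> R) : nat -> {poly R} :=
  fun n => 'X * (u n)%:P.

From Pilot Require Import Defs.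
From HB Require Import structures.
From mathcomp Require Import all_boot all_order all_algebra.
From mathcomp Require Import ring zify.
Import GRing.Theory Num.Theory.

(* The coefficient of [x] is additive along Hurwitz products of sequences that are
   [(1, 0, 0, ...)] modulo [x], so [c_{1,m}] is the sum over [i] of the coefficient of [x]
   in [(b^(i))^{x u_{i-1}}[m]], namely [\sum_k Y_{m,k+1}(b^(i)) (-1)^k k! u_{i-1}].
   For [i = 1] the Bell values are Stirling numbers and the sum is [[m = 1]], which is
   [log (1 + (exp t - 1)) = t]; this is checked over a field of characteristic 0 with
   truncated power series and transported to [R] through [int].  For [i >= 2] only the
   partition of [m] into [m / i] parts of size [i] contributes, and only when [i] divides [m]. *)

Lemma dvdn_fact_blocks a b : 0 < b -> a`! * b`! ^ a %| (b * a)`!.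
Proof.
move=> b_gt0; elim: a => [|a IHa]; first by rewrite muln0.
set N := b * a.+1.
have le_bN : b <= N by rewrite /N mulnS leq_addr.
have binNb := bin_fact le_bN.
rewrite (_ : N - b = b * a) in binNb; last by rewrite /N mulnS addKn.
have binNbE : 'C(N, b) = a.+1 * 'C(N.-1, b.-1).
  have := mul_bin_diag N b.-1; rewrite prednK // => diag.
  by apply/eqP; rewrite -(eqn_pmul2l b_gt0) -diag /N; apply/eqP; ring.
case/dvdnP: IHa => q Dq; apply/dvdnP; exists (q * 'C(N.-1, b.-1)).
by rewrite -binNb binNbE Dq factS expnS; ring.
Qed.

Lemma dvdn_fact_addn m n : m`! * n`! %| (m + n)`!.
Proof. by rewrite -(bin_fact (leq_addr n m)) addKn dvdn_mull. Qed.

Lemma dvdn_prod_fact_blocks (I : Type) (r : seq I) (a b : I -> nat) :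
  (forall i, 0 < b i) ->
  \prod_(i <- r) ((a i)`! * (b i)`! ^ a i) %| (\sum_(i <- r) b i * a i)`!.
Proof.
move=> b_gt0; elim: r => [|i r IHr]; first by rewrite !big_nil.
rewrite !big_cons; apply: dvdn_trans (dvdn_fact_addn _ _).
by apply: dvdn_mul => //; apply: dvdn_fact_blocks.
Qed.

Lemma divn_fact_blocks j d : 0 < j -> 0 < d ->
  (j * d)`! %/ (j * d`! ^ j) = (j * d)`! %/ (j`! * d`! ^ j) * j.-1`!.
Proof.
case: j => [|j] // _ d_gt0.
have := dvdn_fact_blocks j.+1 d d_gt0; rewrite (mulnC d) => /divnK.
set q := _ %/ _ => Dq; rewrite -{1}Dq factS.
have -> : q * (j.+1 * j`! * d`! ^ j.+1) = (q * j`!) * (j.+1 * d`! ^ j.+1) by ring.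
by rewrite mulnK // muln_gt0 expn_gt0 fact_gt0.
Qed.

Local Open Scope ring_scope.

Lemma sum_if_eq_mulnS (V : nmodType) d m (G : nat -> V) : (0 < d)%N -> (0 < m)%N ->
  \sum_(k < m) (if m == (d * k.+1)%N then G k else 0) =
  if (d %| m)%N then G (m %/ d).-1 else 0.
Proof.
move=> d_gt0 m_gt0; rewrite -big_mkcond /=.
case: ifP => [dvd_dm | ndvd]; last first.
  by rewrite big_pred0 // => k; apply/negbTE/eqP => Dm; rewrite Dm dvdn_mulr in ndvd.
have Dm := divnK dvd_dm; have j_gt0 : (0 < m %/ d)%N by rewrite divn_gt0 // dvdn_leq.
have lt_jm : ((m %/ d).-1 < m)%N.
  by rewrite -{2}Dm; apply: leq_trans (leq_pmulr _ d_gt0); rewrite prednK.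
rewrite (big_pred1 (Ordinal lt_jm)) // => k /=.
apply/eqP/eqP => [Dm' | ->]; last by rewrite /= prednK // mulnC Dm.
apply/val_inj => /=; apply/succn_inj; rewrite prednK //.
by apply/eqP; rewrite -(eqn_pmul2l d_gt0) -Dm' mulnC Dm.
Qed.

Lemma sum_divisors (V : nmodType) m (F : nat -> V) : (0 < m)%N ->
  (forall d, (0 < d)%N -> ~~ (d %| m)%N -> F d = 0) ->
  \sum_(i < m) F i.+1 = \sum_(d <- divisors m) F d.
Proof.
move=> m_gt0 F0.
have perm_div : perm_eq (divisors m) [seq d <- index_iota 1 m.+1 | (d %| m)%N].
  apply: uniq_perm; [exact: divisors_uniq | exact/filter_uniq/iota_uniq |] => d.
  rewrite mem_filter mem_index_iota -dvdn_divisors //; case: (boolP (d %| m)%N) => //= dvd_dm.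
  have d_gt0 : (0 < d)%N by rewrite lt0n; apply: contraTneq dvd_dm => ->; rewrite dvd0n -lt0n.
  by rewrite d_gt0 ltnS dvdn_leq.
rewrite (perm_big _ perm_div) big_filter big_mkcond big_add1 /= big_mkord.
by rewrite [RHS]big_mkcond; apply: eq_bigr => i _; case: ifP => // /negbT; apply: F0.
Qed.

Lemma prodZXn (R : comNzRingType) (I : Type) (r : seq I) (c : I -> R) (e : I -> nat) :
  \prod_(i <- r) (c i *: 'X^(e i)) = (\prod_(i <- r) c i) *: 'X^(\sum_(i <- r) e i).
Proof.
elim: r => [|i r IHr]; first by rewrite !big_nil scale1r expr0.
by rewrite !big_cons IHr -scalerAl -scalerAr scalerA exprD.
Qed.

Lemma coef1M (R : comNzRingType) (p q : {poly R}) : (p * q)`_1 = p`_0 * q`_1 + p`_1 * q`_0.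
Proof. by rewrite coefM !big_ord_recl big_ord0 addr0. Qed.

Lemma rmorph_bellY (S T : comPzRingType) (f : {rmorphism S -> T}) n k (y : nat -> S) :
  f (bellY n k y) = bellY n k (f \o y).
Proof.
rewrite rmorph_sum; apply: eq_bigr => j _.
rewrite rmorphM rmorph_nat rmorph_prod; congr (_ * _).
by apply: eq_bigr => l _; rewrite rmorphXn.
Qed.

Lemma eq_bellY (S : comPzRingType) n k (y y' : nat -> S) : y =1 y' -> bellY n k y = bellY n k y'.
Proof.
move=> eq_y; apply: eq_bigr => j _; congr (_ * _).
by apply: eq_bigr => l _; rewrite eq_y.
Qed.

Lemma bellY00 (S : comPzRingType) (y : nat -> S) : bellY 0 0 y = 1.
Proof.
rewrite /bellY (eq_bigl xpredT) => [|j]; last by rewrite !big_ord0.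
rewrite (eq_bigr (fun _ => 1)) => [|j _]; last by rewrite !big_ord0 mulr1.
by rewrite sumr_const card_ffun !card_ord.
Qed.

Lemma bellYn0 (S : comPzRingType) (y : nat -> S) n : (0 < n)%N -> bellY n 0 y = 0.
Proof.
move=> n_gt0; rewrite /bellY big_pred0 // => f.
apply/negbTE/andP => -[/eqP sum0 /eqP weight].
have : (\sum_(l < n) l.+1 * f l <= \sum_(l < n) n * f l)%N.
  by apply: leq_sum => l _; rewrite leq_mul2r ltn_ord orbT.
by rewrite -big_distrr /= sum0 muln0 weight leqn0 => /eqP n0; rewrite n0 in n_gt0.
Qed.

Section OnlyParts.
Variables (n i : nat).
Implicit Types f : {ffun 'I_n -> 'I_n.+1}.

Definition only_parts f := [forall l : 'I_n, (l.+1 != i) ==> (f l == 0 :> nat)].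

Lemma prod_bseq_only_parts (S : comPzRingType) f : (1 < i)%N ->
  \prod_(l < n) Defs.bseq S i l.+1 ^+ f l = (only_parts f)%:R.
Proof.
move=> i_gt1; rewrite /Defs.bseq (gtn_eqF i_gt1) /=.
have [/forallP onlyf|] := boolP (only_parts f).
  apply: big1 => l _; case: eqP => [_|/eqP l_i]; first by rewrite expr1n.
  by move/implyP: (onlyf l) => /(_ l_i) /eqP ->.
rewrite negb_forall => /existsP[l]; rewrite negb_imply => /andP[/negbTE l_i f_l].
by rewrite (bigD1 l) //= l_i expr0n (negbTE f_l) mul0r.
Qed.

Lemma weight_only_parts f : only_parts f ->
  (\sum_(l < n) l.+1 * f l = i * \sum_(l < n) f l)%N.
Proof.
move/forallP=> onlyf; rewrite big_distrr; apply: eq_bigr => l _.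
case: (eqVneq l.+1 i) => [-> //|l_i].
by move/implyP: (onlyf l) => /(_ l_i) /eqP ->; rewrite /= !muln0.
Qed.
End OnlyParts.

Lemma bellY_bseq (S : comPzRingType) n k i : (0 < n)%N -> (1 < i)%N ->
  bellY n k (Defs.bseq S i) = if n == (i * k)%N then (n`! %/ (k`! * i`! ^ k))%:R else 0.
Proof.
move=> n_gt0 i_gt1.
rewrite /bellY; under eq_bigr do rewrite prod_bseq_only_parts //.
rewrite (bigID (only_parts n i)) /= [X in _ + X]big1 ?addr0; last first.
  by move=> f /andP[_ /negbTE onlyf]; rewrite onlyf mulr0.
rewrite (eq_bigr (fun f : {ffun 'I_n -> 'I_n.+1} =>
    (n`! %/ \prod_(l < n) ((f l)`! * (l.+1)`! ^ f l))%:R)); last first.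
  by move=> f /andP[_ onlyf]; rewrite onlyf mulr1.
case: eqP => [Dn|ne_n]; last first.
  rewrite big_pred0 // => f; apply/negP => /andP[/andP[/eqP sumk /eqP weight] onlyf].
  by apply: ne_n; rewrite -weight (weight_only_parts _ _ _ onlyf) sumk.
have k_gt0 : (0 < k)%N by move: n_gt0; rewrite Dn muln_gt0 => /andP[].
have lt_i1n : (i.-1 < n)%N by rewrite Dn; apply: leq_trans (leq_pmulr _ k_gt0); lia.
have lt_kn1 : (k < n.+1)%N by rewrite ltnS Dn leq_pmull //; lia.
pose l0 := Ordinal lt_i1n.
have only0 f l : only_parts n i f -> l != l0 -> f l = 0 :> nat.
  move/forallP=> onlyf ne_l; apply/eqP; move/implyP: (onlyf l); apply.
  by apply: contra ne_l => /eqP l_i; apply/eqP/val_inj => /=; lia.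
have sum_only f : only_parts n i f -> (\sum_(l < n) f l = f l0)%N.
  by move=> onlyf; rewrite (bigD1 l0) //= big1 ?addn0 // => l; apply: only0.
pose f0 : {ffun 'I_n -> 'I_n.+1} := [ffun l => if l == l0 then Ordinal lt_kn1 else ord0].
have f0_l0 : f0 l0 = k :> nat by rewrite ffunE eqxx.
have only_f0 : only_parts n i f0.
  apply/forallP => l; apply/implyP => l_i; rewrite ffunE.
  case: (l =P l0) => [ll0|//]; move: l_i; rewrite ll0 /= prednK ?eqxx //; lia.
rewrite (big_pred1 f0) => [|f] /=.
  rewrite (bigD1 l0) //= big1 ?muln1 ?f0_l0 ?prednK //; first lia.
  by move=> l ne_l; rewrite (only0 f0) // mul1n expn0.
apply/andP/eqP => [[/andP[/eqP sumk _] onlyf] | ->].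
  apply/ffunP => l; apply/val_inj; rewrite ffunE.
  case: eqP => [->|/eqP ne_l] /=; last by rewrite only0.
  by rewrite -sumk sum_only.
by rewrite (weight_only_parts _ _ _ only_f0) sum_only // f0_l0 -Dn !eqxx.
Qed.

Section StirlingIdentity.
Variable F : numFieldType.

Lemma fact_neq0 n : n`!%:R != 0 :> F.
Proof. by rewrite pnatr_eq0 -lt0n fact_gt0. Qed.

Definition expTrunc (N : nat) (x : {poly F}) : {poly {poly F}} :=
  \poly_(j < N.+1) (j`!%:R^-1 *: x ^+ j).

Lemma coef_prod_expTrunc N (a : nat -> {poly F}) m k : (k <= N)%N ->
  (\prod_(l < m) expTrunc N (a l))`_k = k`!%:R^-1 *: (\sum_(l < m) a l) ^+ k.
Proof.
elim: m k => [|m IHm] k le_kN.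
  rewrite !big_ord0 coef1 expr0n; case: k {le_kN} => [|k] /=.
    by rewrite invr1 scale1r.
  by rewrite scaler0.
rewrite !big_ord_recr /= coefM addrC exprDn scaler_sumr; apply: eq_bigr => j _.
rewrite IHm ?(leq_trans (leq_ord j)) // coef_poly ltnS (leq_trans (leq_subr j k)) //.
rewrite -scalerAl -scalerAr scalerA -scaler_nat scalerA [_ * a m ^+ _]mulrC.
congr (_ *: _); rewrite -(bin_fact (leq_ord j)) !natrM.
have binC_neq0 : 'C(k, j)%:R != 0 :> F by rewrite pnatr_eq0 -lt0n bin_gt0 leq_ord.
have := fact_neq0 j; have := fact_neq0 (k - j).
move: ('C(k, j)%:R : F) binC_neq0 => C C0 f1 f2.
by field; rewrite C0 f1 f2.
Qed.

Definition expm1Trunc (n : nat) : {poly F} := \sum_(l < n) (l.+1`!%:R^-1 *: 'X^(l.+1)).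

Lemma coef_expm1Trunc_exp n k : (k <= n)%N ->
  (k`!%:R^-1 *: expm1Trunc n ^+ k)`_n =
  \sum_(f : {ffun 'I_n -> 'I_n.+1} |
          ((\sum_(l < n) (f l : nat))%N == k) &&
          ((\sum_(l < n) (l.+1 * f l))%N == n))
     (\prod_(l < n) ((f l)`! * (l.+1)`! ^ f l))%N%:R^-1.
Proof.
move=> le_kn; rewrite -(coef_prod_expTrunc n (fun l => l.+1`!%:R^-1 *: 'X^(l.+1)) n k le_kn).
rewrite /expTrunc; under eq_bigr do rewrite poly_def.
rewrite bigA_distr_bigA /= coef_sum coef_sum [RHS]big_mkcond /=; apply: eq_bigr => f _.
rewrite prodZXn coefZ coefXn.
rewrite (eq_bigr (fun l : 'I_n =>
    ((f l)`!%:R^-1 * (l.+1)`!%:R^-1 ^+ f l) *: 'X^(l.+1 * f l))); last first.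
  by move=> l _; rewrite exprZn scalerA -exprM [(l.+1 * _)%N]mulnC.
rewrite prodZXn mulr_natr coefMn coefZ coefXn (eq_sym k).
case: (_ == k); last by rewrite mulr0n.
rewrite andTb (eq_sym n); case: (_ == n) => /=; last by rewrite mulr0.
rewrite mulr1 natr_prod -prodfV; apply: eq_bigr => l _.
by rewrite natrM natrX invfM exprVn.
Qed.

(* The sum is a truncated [log (1 + A)] with [A = exp X - 1 + O(X^n.+1)]: its derivative
   [A' * \sum_(k < n) (- A) ^+ k] has [A' = 1 + A - X^n/n!], and [(1 + A)] times the
   geometric sum telescopes to [1 - (- A) ^+ n], which is [1 + O(X^n)]. *)
Lemma coef_log1p_expm1Trunc n : (0 < n)%N ->
  (\sum_(k < n) ((-1) ^+ k / k.+1%:R) *: expm1Trunc n ^+ k.+1)`_n *+ n = (n == 1%N)%:R.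
Proof.
move=> n_gt0; set A := expm1Trunc n; set L := \sum_(k < n) _.
pose e (l : nat) : {poly F} := l`!%:R^-1 *: 'X^l.
have dA : A^`() = 1 + A - e n.
  apply/eqP; rewrite eq_sym subr_eq; apply/eqP.
  rewrite /A /expm1Trunc raddf_sum /= (eq_bigr (fun l : 'I_n => e l)); last first.
    move=> l _; rewrite derivZ derivXn /e /= -scaler_nat scalerA.
    by rewrite factS natrM invfM mulrAC mulVf ?mul1r // pnatr_eq0.
  rewrite -(big_ord_recr n (fun l => e l)) big_ord_recl /e /= invr1 scale1r expr0.
  by congr (_ + _); apply: eq_bigr.
have dL : L^`() = A^`() * \sum_(k < n) (- A) ^+ k.
  rewrite /L raddf_sum /= mulr_sumr; apply: eq_bigr => k _.
  rewrite derivZ deriv_exp /= -scaler_nat scalerA divfK ?pnatr_eq0 //.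
  by rewrite -scaleN1r exprZn -scalerAr.
have telescope : (1 + A) * \sum_(k < n) (- A) ^+ k = 1 - (- A) ^+ n.
  have := subrXX 1 (- A) n; rewrite expr1n opprK => ->.
  by congr (_ * _); apply: eq_bigr => i _; rewrite expr1n mul1r.
have X_dvdA : A = 'X * \sum_(l < n) (l.+1`!%:R^-1 *: 'X^l).
  by rewrite /A big_distrr; apply: eq_bigr => l _; rewrite exprS scalerAr.
have lt_n1n : (n.-1 < n)%N by rewrite prednK.
have coefAn : ((- A) ^+ n)`_n.-1 = 0.
  by rewrite X_dvdA -scaleN1r exprZn coefZ exprMn coefXnM lt_n1n mulr0.
have coef_en : (e n * \sum_(k < n) (- A) ^+ k)`_n.-1 = 0.
  by rewrite /e -scalerAl coefZ coefXnM lt_n1n mulr0.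
suff : (L^`())`_n.-1 = (n == 1%N)%:R by rewrite coef_deriv prednK.
rewrite dL dA mulrBl telescope !coefB coefAn coef_en coef1 !subr0.
by case: (n) n_gt0 => [|[|m]].
Qed.

Lemma bellY1E n k : (k <= n)%N ->
  bellY n k (fun _ => 1 : F) = n`!%:R * (k`!%:R^-1 *: expm1Trunc n ^+ k)`_n.
Proof.
move=> le_kn; rewrite coef_expm1Trunc_exp // mulr_sumr; apply: eq_bigr => f /andP[_ /eqP Dn].
rewrite [X in _ * X]big1 ?mulr1 => [|l _]; last by rewrite expr1n.
have := dvdn_prod_fact_blocks _ (index_enum 'I_n) (fun l => f l) (fun l => l.+1) (fun _ => erefl).
rewrite Dn => dvd_n; rewrite natr_div ?unitfE ?pnatr_eq0 -?lt0n //.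
by apply: prodn_gt0 => l; rewrite muln_gt0 !(fact_gt0, expn_gt0).
Qed.

Lemma sum_bellY1_signed_fact_num n : (0 < n)%N ->
  \sum_(k < n) bellY n k.+1 (fun _ => 1 : F) * ((-1) ^+ k * k`!%:R) = (n == 1%N)%:R.
Proof.
move=> n_gt0; have := coef_log1p_expm1Trunc n n_gt0; set A := expm1Trunc n => logA.
rewrite (eq_bigr (fun k : 'I_n => n`!%:R * (((-1) ^+ k / k.+1%:R) *: A ^+ k.+1)`_n)); last first.
  move=> k _; rewrite bellY1E // !coefZ factS natrM.
  have := fact_neq0 k; have : k.+1%:R != 0 :> F by rewrite pnatr_eq0.
  move: (k.+1%:R : F) (k`!%:R : F) => a b a0 b0.
  by field; rewrite a0 b0.
rewrite -mulr_sumr -coef_sum; case: n n_gt0 A logA => [|n] // _ A logA.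
rewrite factS natrM -mulrA mulrCA [n.+1%:R * _]mulr_natl logA.
by case: n {A logA} => [|n]; rewrite ?mulr1 ?mulr0.
Qed.
End StirlingIdentity.

Lemma rmorph_sum_bellY1_signed_fact (S T : comPzRingType) (f : {rmorphism S -> T}) n :
  f (\sum_(k < n) bellY n k.+1 (fun _ => 1) * ((-1) ^+ k * k`!%:R)) =
  \sum_(k < n) bellY n k.+1 (fun _ => 1) * ((-1) ^+ k * k`!%:R).
Proof.
rewrite rmorph_sum; apply: eq_bigr => k _.
rewrite !rmorphM rmorphXn rmorphN1 rmorph_nat rmorph_bellY.
by congr (_ * _); apply: eq_bellY => l; rewrite /= rmorph1.
Qed.

Lemma sum_bellY1_signed_fact (R : comPzRingType) n : (0 < n)%N ->
  \sum_(k < n) bellY n k.+1 (fun _ => 1 : R) * ((-1) ^+ k * k`!%:R) = (n == 1%N)%:R.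
Proof.
move=> n_gt0.
have intE : \sum_(k < n) bellY n k.+1 (fun _ => 1 : int) * ((-1) ^+ k * k`!%:R) = (n == 1%N)%:R.
  apply: (@intr_inj rat).
  by rewrite rmorph_sum_bellY1_signed_fact rmorph_nat sum_bellY1_signed_fact_num.
by rewrite -(rmorph_sum_bellY1_signed_fact _ R intr) intE rmorph_nat.
Qed.

Section LinearCoefficient.
Variable R : comNzRingType.
Implicit Types F G : nat -> {poly R}.

Definition unit_modX F := forall n, (F n)`_0 = (n == 0)%N%:R.

Lemma hunit_unit_modX : unit_modX (hunit {poly R}).
Proof. by case=> [|n]; rewrite /hunit /= ?coef1 ?coef0. Qed.

Lemma hprod_unit_modX F G : unit_modX F -> unit_modX G -> unit_modX (hprod F G).
Proof.
move=> F0 G0 n; rewrite coef_sum big_ord_recl big1 ?addr0 => [|h _].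
  by rewrite -mulrA mulr_natl coefMn coef0M F0 G0 subn0 bin0 mul1r.
by rewrite -mulrA mulr_natl coefMn coef0M F0 mul0r mul0rn.
Qed.

Lemma coef1_hprod F G n : unit_modX F -> unit_modX G -> (0 < n)%N ->
  (hprod F G n)`_1 = (F n)`_1 + (G n)`_1.
Proof.
move=> F0 G0 n_gt0; rewrite coef_sum.
under eq_bigr do rewrite -mulrA mulr_natl coefMn coef1M F0 G0 mulrnDl.
rewrite big_split /= addrC; congr (_ + _).
  rewrite big_ord_recr /= subnn binn mulr1 big1 ?add0r // => h _.
  by rewrite subn_eq0 leqNgt ltn_ord mulr0 mul0rn.
rewrite big_ord_recl /= subn0 bin0 mul1r big1 ?addr0 // => h _.
by rewrite mul0r mul0rn.
Qed.

Lemma hprods_unit_modX (f : nat -> nat -> {poly R}) M :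
  (forall i, unit_modX (f i)) -> unit_modX (hprods f M).
Proof.
move=> f_unit; elim: M => [|M IHM] /=; first exact: hunit_unit_modX.
exact: hprod_unit_modX.
Qed.

Lemma coef1_hprods (f : nat -> nat -> {poly R}) M n :
  (forall i, unit_modX (f i)) -> (0 < n)%N ->
  (hprods f M n)`_1 = \sum_(i < M) (f i.+1 n)`_1.
Proof.
move=> f_unit n_gt0; elim: M => [|M IHM] /=.
  by rewrite big_ord0 /hunit gtn_eqF ?coef0.
by rewrite coef1_hprod ?IHM ?big_ord_recr //; apply: hprods_unit_modX.
Qed.

Lemma coef0_falling (c : R) k : (\prod_(i < k.+1) ('X * c%:P - i%:R))`_0 = 0.
Proof. by rewrite big_ord_recl subr0 coef0M coefXM mul0r. Qed.

Lemma coef1_falling (c : R) k :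
  (\prod_(i < k.+1) ('X * c%:P - i%:R))`_1 = (-1) ^+ k * k`!%:R * c.
Proof.
rewrite big_ord_recl subr0 -mulrA coefXM /= coefCM mulrC; congr (_ * _).
rewrite -horner_coef0 horner_prod; elim: k => [|k IHk]; first by rewrite big_ord0 expr0 mul1r.
rewrite big_ord_recr /= IHk !hornerE hornerMn hornerC /= factS natrM exprS.
by rewrite /bump add1n; ring.
Qed.

Lemma hpow_unit_modX (a : nat -> {poly R}) (c : R) : unit_modX (hpow a ('X * c%:P)).
Proof.
case=> [|n]; rewrite /hpow coef_sum.
  by rewrite big_ord1 bellY00 big_ord0 mulr1 coef1.
rewrite big1 // => -[[|k] lt_kn] _ /=; first by rewrite bellYn0 // mul0r coef0.
by rewrite coef0M coef0_falling mulr0.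
Qed.

Lemma coef1_hpow (a : nat -> {poly R}) (c : R) n : (0 < n)%N ->
  (hpow a ('X * c%:P) n)`_1 = \sum_(k < n) (bellY n k.+1 a)`_0 * ((-1) ^+ k * k`!%:R) * c.
Proof.
move=> n_gt0; rewrite coef_sum big_ord_recl bellYn0 // mul0r coef0 add0r.
apply: eq_bigr => k _.
by rewrite coef1M coef0_falling coef1_falling mulr0 addr0 !mulrA.
Qed.
End LinearCoefficient.

Section TauLinearCoefficient.
Variable R : comNzRingType.

Lemma coef0_bellY_bseq n k i : (bellY n k (Defs.bseq {poly R} i))`_0 = bellY n k (Defs.bseq R i).
Proof.
rewrite -[LHS]/(coefp 0 _) rmorph_bellY; apply: eq_bellY => l /=.
by rewrite /Defs.bseq; case: ifP => _; [rewrite coef1 | case: ifP; rewrite ?coef1 ?coef0].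
Qed.

Lemma coef1_hpow_bseq1 (c : R) m : (0 < m)%N ->
  (hpow (Defs.bseq {poly R} 1) ('X * c%:P) m)`_1 = (m == 1)%N%:R * c.
Proof.
move=> m_gt0; rewrite coef1_hpow // -(sum_bellY1_signed_fact R m m_gt0) mulr_suml.
by apply: eq_bigr => k _; rewrite coef0_bellY_bseq.
Qed.

Lemma coef1_hpow_bseq (c : R) d m : (0 < m)%N -> (1 < d)%N ->
  (hpow (Defs.bseq {poly R} d) ('X * c%:P) m)`_1 =
  if (d %| m)%N then (-1) ^+ (m %/ d).-1 * (m`! %/ (m %/ d * d`! ^ (m %/ d)))%:R * c
  else 0.
Proof.
move=> m_gt0 d_gt1; have d_gt0 : (0 < d)%N by lia.
pose G k := (m`! %/ (k.+1`! * d`! ^ k.+1))%:R * ((-1) ^+ k * k`!%:R) * c : R.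
rewrite coef1_hpow // (eq_bigr (fun k : 'I_m => if m == (d * k.+1)%N then G k else 0)).
  rewrite sum_if_eq_mulnS //; case: ifP => // dvd_dm.
  have j_gt0 : (0 < m %/ d)%N by rewrite divn_gt0 // dvdn_leq.
  rewrite /G; move: (m %/ d)%N j_gt0 (divnK dvd_dm) => j j_gt0 <-.
  by rewrite prednK // divn_fact_blocks // natrM; ring.
by move=> k _; rewrite coef0_bellY_bseq bellY_bseq //; case: ifP; rewrite ?mul0r.
Qed.

Lemma coef1_tau_xseq (u : nat -> R) m : (0 < m)%N ->
  (tau (xseq u) m)`_1 =
  \sum_(d <- divisors m) (hpow (Defs.bseq {poly R} d) ('X * (u d.-1)%:P) m)`_1.
Proof.
move=> m_gt0; rewrite /tau (_ : (maxn m.+1 2).-1 = m); last by lia.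
rewrite coef1_hprods //; last by move=> i; apply: hpow_unit_modX.
apply: sum_divisors => // -[|[|d]] // _ ndvd; first by rewrite dvd1n in ndvd.
by rewrite coef1_hpow_bseq // (negbTE ndvd).
Qed.

Lemma coef1_tau_xseq_proper (u : nat -> R) m : (1 < m)%N ->
  (tau (xseq u) m)`_1 = u m.-1 -
    \sum_(d <- divisors m | (d != 1%N) && (d != m))
       ((-1) ^+ (m %/ d) * ((m`! %/ ((m %/ d) * (d`! ^ (m %/ d))))%N)%:R) * u d.-1.
Proof.
move=> m_gt1; have m_gt0 : (0 < m)%N by lia.
rewrite coef1_tau_xseq // (bigD1_seq 1) ?divisor1 ?divisors_uniq // coef1_hpow_bseq1 //.
rewrite -[LHS]/(_ + _) (gtn_eqF m_gt1) mul0r add0r (big_rem m) ?divisors_id //.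
rewrite -[LHS]/(_ + _) (gtn_eqF m_gt1) -[~~ false]/true.
rewrite coef1_hpow_bseq // dvdnn divnn m_gt0 /= mul1n expn1 divnn fact_gt0 mulr1 mul1r.
rewrite rem_filter ?divisors_uniq // big_filter_cond -sumrN; congr (_ + _).
rewrite big_seq_cond [RHS]big_seq_cond.
apply: eq_big => [d|d /andP[d_div /andP[_ d_ne1]]]; first by congr (_ && _); rewrite andbC.
have dvd_dm : (d %| m)%N by rewrite (dvdn_divisors _ m_gt0).
have d_gt0 : (0 < d)%N := dvdn_gt0 m_gt0 dvd_dm.
have d_gt1 : (1 < d)%N by rewrite ltn_neqAle eq_sym d_ne1.
have j_gt0 : (0 < m %/ d)%N by rewrite divn_gt0 // dvdn_leq.
have sgnE : (-1) ^+ (m %/ d)%N = - (-1) ^+ (m %/ d)%N.-1 :> R.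
  by rewrite -{1}(prednK j_gt0) exprS mulN1r.
by rewrite coef1_hpow_bseq // dvd_dm sgnE; ring.
Qed.
End TauLinearCoefficient.

Theorem mainTheorem11 (R : comNzRingType) (u : nat -> R) :
  let q := tau (xseq u) in
  let c := fun (i n : nat) => (q n)`_i in
  u 0%N = c 1%N 1%N /\
  (forall m : nat, (2 <= m)%N ->
     u m.-1 = c 1%N m +
       \sum_(k <- divisors m | (k != 1%N) && (k != m))
          ((-1) ^+ (m %/ k) *
           ((m`! %/ ((m %/ k) * (k`! ^ (m %/ k))))%N)%:R) * u k.-1) /\
  (forall p : nat, prime p -> u p.-1 = c 1%N p).
Proof.
move=> q c; split; last split.
- by rewrite /c /q coef1_tau_xseq // big_seq1 coef1_hpow_bseq1 // mul1r.
- by move=> m m_ge2; rewrite /c /q coef1_tau_xseq_proper // subrK.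
move=> p p_pr; rewrite /c /q coef1_tau_xseq_proper ?prime_gt1 // big1_seq ?subr0 //.
move=> d /andP[/andP[d_ne1 d_nep]]; rewrite -dvdn_divisors ?prime_gt0 //.
by case/(primeP p_pr).2/orP => /eqP d_eq; rewrite d_eq eqxx in d_ne1 d_nep.
Qed.
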